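(* Let $\psi\in\mathcal K$ have radius of convergence $R_\psi>0$ and Khinchin family $(Y_t)$, and for $t\in(0,R_\psi)$ let $q(t)$ be the extinction probability of the Galton–Watson process with offspring distribution $Y_t$. If $\lim_{t\uparrow R_\psi}\psi(t)/t=+\infty$, then $$q(t)\sim\frac{\psi(0)}{\psi(t)}\qquad\text{as }t\uparrow R_\psi.$$
   Context: $\mathcal K$ is the class of non-constant power series $f(z)=\sum_{n\ge0}a_nz^n$ with positive radius of convergence $R$, non-negative coefficients and $a_0>0$; its Khinchin family is given by $\mathbf P(X_t=n)=a_nt^n/f(t)$ for $n\ge0$, $t\in(0,R)$. The extinction probability is the probability that the Galton–Watson tree is finite. $a(t)\sim b(t)$ means $a(t)/b(t)\to1$. *)

From Stdlib Require Import Reals.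
From Coquelicot Require Import Coquelicot.
Open Scope R_scope.

Definition in_K (a : nat -> R) : Prop :=
  (forall n, 0 <= a n) /\ 0 < a 0%nat /\ (exists n, (1 <= n)%nat /\ 0 < a n) /\
  Rbar_lt (Finite 0) (CV_radius a).

(* Probability generating function of the Khinchin variable Y_t:
   E[s^{Y_t}] = sum_n (a_n t^n / psi(t)) s^n = psi(t s) / psi(t). *)
Definition khinchin_pgf (a : nat -> R) (t s : R) : R :=
  PSeries a (t * s) / PSeries a t.

(* Extinction probability of the Galton--Watson process with offspring
   distribution Y_t: q = lim_n P(Z_n = 0) = lim_n g^{(n)}(0), where g is the
   offspring pgf and g^{(n)} its n-th iterate. *)
Definition extinction_prob (a : nat -> R) (t : R) : R :=
  real (Lim_seq (fun n => Nat.iter n (khinchin_pgf a t) 0)).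

(* The filter "t tends to R from below" (t in (0,R)), R possibly +infinity. *)
Definition upto_radius (a : nat -> R) : (R -> Prop) -> Prop :=
  within (fun t => 0 < t /\ Rbar_lt (Finite t) (CV_radius a))
         (Rbar_locally (CV_radius a)).

(** Write [psi] for the generating function and [g_t(s) = psi(t s)/psi(t)] for
    the offspring pgf.  Fix a small [d > 0].  Once [psi(t)/t >= psi(d)/d],
    [g_t] maps [[0, psi(d)/psi(t)]] into [[psi(0)/psi(t), psi(d)/psi(t)]],
    because [t s <= d] there.  Hence the extinction probability [q(t)], the
    limit of the iterates of [g_t] from [0], satisfies
    [psi(0) <= q(t) psi(t) <= psi(d)], and [psi(d)/psi(0)] tends to [1] as
    [d] tends to [0]. *)

From Stdlib Require Import Reals Lra.
From Coquelicot Require Import Coquelicot.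
Open Scope R_scope.

Lemma Lim_seq_iter_bounds (g : R -> R) (lo hi : R) :
  0 <= lo <= hi -> (forall s, 0 <= s <= hi -> lo <= g s <= hi) ->
  lo <= real (Lim_seq (fun n => Nat.iter n g 0)) <= hi.
Proof.
  intros Hlohi Hg.
  assert (Hiter : forall n, lo <= Nat.iter (S n) g 0 <= hi).
  { induction n as [|n IH]; apply Hg; [lra |].
    split; [apply Rle_trans with lo |]; tauto. }
  assert (Hlo : Rbar_le lo (Lim_seq (fun n => Nat.iter n g 0))).
  { rewrite <- (Lim_seq_const lo). apply Lim_seq_le_loc.
    exists 1%nat. intros [|n] Hn; [inversion Hn | apply Hiter]. }
  assert (Hhi : Rbar_le (Lim_seq (fun n => Nat.iter n g 0)) hi).
  { rewrite <- (Lim_seq_const hi). apply Lim_seq_le_loc.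
    exists 1%nat. intros [|n] Hn; [inversion Hn | apply Hiter]. }
  destruct (Lim_seq _) as [q| |]; simpl in *; [lra | contradiction ..].
Qed.

Section NonnegativePowerSeries.

Variable a : nat -> R.
Hypothesis a_ge0 : forall n, 0 <= a n.

Lemma PSeries_le (x y : R) :
  0 <= x <= y -> Rbar_lt y (CV_radius a) -> PSeries a x <= PSeries a y.
Proof.
  intros Hxy Hy. apply Series_le.
  - intros n.
    pose proof (a_ge0 n). pose proof (pow_le x n (proj1 Hxy)).
    pose proof (pow_incr x y n Hxy). nra.
  - apply ex_series_ext with (fun k => scal (pow_n y k) (a k)).
    { intros k. apply Rmult_comm. }
    apply CV_radius_inside. rewrite Rabs_pos_eq; [exact Hy | lra].
Qed.

Lemma PSeries_ge_PSeries_0 (x : R) :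
  0 <= x -> Rbar_lt x (CV_radius a) -> PSeries a 0 <= PSeries a x.
Proof. intros Hx HxR. apply PSeries_le; [lra | exact HxR]. Qed.

Hypothesis a0_gt0 : 0 < a 0%nat.

Lemma PSeries_gt0 (x : R) :
  0 <= x -> Rbar_lt x (CV_radius a) -> 0 < PSeries a x.
Proof.
  intros Hx HxR. pose proof (PSeries_ge_PSeries_0 x Hx HxR).
  rewrite PSeries_0 in *. lra.
Qed.

Lemma khinchin_pgf_bounds (d t s : R) :
  0 < d -> Rbar_lt d (CV_radius a) -> 0 < t -> Rbar_lt t (CV_radius a) ->
  PSeries a d / d <= PSeries a t / t ->
  0 <= s <= PSeries a d / PSeries a t ->
  PSeries a 0 / PSeries a t <= khinchin_pgf a t s <= PSeries a d / PSeries a t.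
Proof.
  intros Hd HdR Ht HtR Hslope Hs.
  pose proof (PSeries_gt0 t (Rlt_le _ _ Ht) HtR) as Hpsit.
  assert (Hts : 0 <= t * s <= d).
  { split; [nra |].
    apply Rle_trans with (t * (PSeries a d / PSeries a t)); [nra |].
    apply Rmult_le_compat_r with (r := d * t / PSeries a t) in Hslope.
    2: { apply Rlt_le, Rdiv_lt_0_compat; nra. }
    replace (PSeries a d / d * (d * t / PSeries a t))
      with (t * (PSeries a d / PSeries a t)) in Hslope by (field; lra).
    replace (PSeries a t / t * (d * t / PSeries a t)) with d in Hslope
      by (field; lra).
    exact Hslope. }
  assert (HtsR : Rbar_lt (t * s) (CV_radius a)).
  { apply Rbar_le_lt_trans with (2 := HdR). simpl. lra. }
  unfold khinchin_pgf, Rdiv.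
  pose proof (Rinv_0_lt_compat _ Hpsit).
  split; apply Rmult_le_compat_r; try lra.
  - apply PSeries_ge_PSeries_0; [lra | exact HtsR].
  - apply PSeries_le; [lra | exact HdR].
Qed.

Lemma extinction_prob_bounds (d t : R) :
  0 < d -> Rbar_lt d (CV_radius a) -> 0 < t -> Rbar_lt t (CV_radius a) ->
  PSeries a d / d <= PSeries a t / t ->
  PSeries a 0 <= extinction_prob a t * PSeries a t <= PSeries a d.
Proof.
  intros Hd HdR Ht HtR Hslope.
  pose proof (PSeries_gt0 t (Rlt_le _ _ Ht) HtR) as Hpsit.
  assert (Hq : PSeries a 0 / PSeries a t <= extinction_prob a t
                 <= PSeries a d / PSeries a t).
  { apply Lim_seq_iter_bounds.
    - pose proof (PSeries_ge_PSeries_0 d (Rlt_le _ _ Hd) HdR).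
      pose proof (Rinv_0_lt_compat _ Hpsit).
      unfold Rdiv. rewrite PSeries_0 in *.
      split; [apply Rmult_le_pos | apply Rmult_le_compat_r]; lra.
    - intros s Hs. exact (khinchin_pgf_bounds d t s Hd HdR Ht HtR Hslope Hs). }
  split; [apply Rle_div_l | apply Rle_div_r]; tauto.
Qed.

End NonnegativePowerSeries.

Lemma PSeries_right_near_0 (a : nat -> R) (eps : R) :
  0 < eps -> Rbar_lt 0 (CV_radius a) ->
  exists d, 0 < d /\ Rbar_lt d (CV_radius a) /\ PSeries a d < PSeries a 0 + eps.
Proof.
  intros Heps HR.
  assert (Hcont : filterlim (PSeries a) (locally 0) (locally (PSeries a 0))).
  { apply continuity_pt_filterlim, PSeries_continuity. rewrite Rabs_R0. exact HR. }
  assert (Hnear : locally 0 (fun x =>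
            Rbar_lt x (CV_radius a) /\ ball (PSeries a 0) eps (PSeries a x))).
  { apply filter_and; [exact (open_Rbar_lt' 0 _ HR) |].
    apply Hcont, (locally_ball _ (mkposreal eps Heps)). }
  destruct Hnear as [delta Hdelta]. pose proof (cond_pos delta).
  destruct (Hdelta (delta / 2)) as [HdR Hball].
  { change (Rabs (delta / 2 - 0) < delta). rewrite Rminus_0_r, Rabs_pos_eq; lra. }
  change (Rabs (PSeries a (delta / 2) - PSeries a 0) < eps) in Hball.
  apply Rabs_def2 in Hball.
  exists (delta / 2). repeat split; [lra | exact HdR | lra].
Qed.

Lemma Rabs_div_sub_1_lt (x y eps : R) :
  0 < y -> y <= x < y + eps * y -> Rabs (x / y - 1) < eps.
Proof.
  intros Hy Hx.
  replace (x / y - 1) with ((x - y) / y) by (field; lra).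
  rewrite Rabs_pos_eq by (apply Rdiv_le_0_compat; lra).
  apply Rlt_div_l; lra.
Qed.

Theorem proposition6p6 (a : nat -> R) :
  in_K a ->
  filterlim (fun t => PSeries a t / t) (upto_radius a) (Rbar_locally p_infty) ->
  filterlim (fun t => extinction_prob a t / (PSeries a 0 / PSeries a t))
            (upto_radius a) (locally 1).
Proof.
  intros (a_ge0 & a0_gt0 & _ & HR) Hslope.
  assert (Hpsi0 : 0 < PSeries a 0) by (rewrite PSeries_0; exact a0_gt0).
  apply filterlim_locally. intros eps. pose proof (cond_pos eps).
  destruct (PSeries_right_near_0 a (eps * PSeries a 0)) as (d & Hd & HdR & Hpsid);
    [nra | exact HR |].
  assert (Hevent : upto_radius a (fun t =>
            (0 < t /\ Rbar_lt t (CV_radius a)) /\ PSeries a d / d < PSeries a t / t)).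
  { apply filter_and.
    - exact (filter_forall (F := Rbar_locally (CV_radius a)) _ (fun t Ht => Ht)).
    - apply (Hslope (fun y => PSeries a d / d < y)).
      exists (PSeries a d / d). auto. }
  revert Hevent. apply filter_imp. intros t [[Ht HtR] Hlt].
  pose proof (PSeries_gt0 a a_ge0 a0_gt0 t (Rlt_le _ _ Ht) HtR).
  destruct (extinction_prob_bounds a a_ge0 a0_gt0 d t Hd HdR Ht HtR (Rlt_le _ _ Hlt)).
  change (Rabs (extinction_prob a t / (PSeries a 0 / PSeries a t) - 1) < eps).
  replace (extinction_prob a t / (PSeries a 0 / PSeries a t))
    with (extinction_prob a t * PSeries a t / PSeries a 0) by (field; lra).
  apply Rabs_div_sub_1_lt; lra.
Qed.
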